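(* Let $M$ be a centrally endo-AIP, semi-projective, retractable right $R$-module with finite uniform dimension. Then $S=\mathrm{End}_R(M)$ is a quasi-Baer ring.
   Context: For $N\le M$, $l_S(N)=\{\phi\in S:\phi(N)=0\}$. An ideal $I$ of $S$ is centrally s-unital if for every $a\in I$ there is $z\in I$ central in $S$ with $az=a$. $M$ is centrally endo-AIP if $l_S(N)$ is a centrally s-unital ideal of $S$ for every fully invariant submodule $N$ of $M$. $M$ is semi-projective if $T=\mathrm{Hom}_R(M,TM)$ for every cyclic right ideal $T$ of $S$. $M$ is retractable if $\mathrm{Hom}_R(M,N)\neq 0$ for every nonzero submodule $N$ of $M$. $M$ has finite uniform dimension if it has an essential submodule that is a finite direct sum of uniform submodules. A ring is quasi-Baer if the right annihilator of every ideal is generated, as a right ideal, by an idempotent. *)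

From HB Require Import structures.
From mathcomp Require Import all_boot all_order all_algebra.
Set Implicit Arguments. Unset Strict Implicit. Unset Printing Implicit Defensive.
Import GRing.Theory.
Local Open Scope ring_scope.

(* Right R-modules are represented as left modules over the converse ring R^c:
   for M : lmodType R^c, the right action m.r is written r *: m.
   Subsets of M are Prop-valued predicates M -> Prop; elements of
   S = End_R(M) are functions M -> M satisfying [endo]; the product in S is
   composition (f * g = f \o g), acting on the left of M. *)

Section ModuleDefs.
Variables (R : pzRingType) (M : lmodType R^c).

Definition endo (f : M -> M) : Prop :=
  forall (a : R^c) (x y : M), f (a *: x + y) = a *: f x + f y.

Definition submodule (N : M -> Prop) : Prop :=
  [/\ N 0, (forall x y, N x -> N y -> N (x + y))
    & (forall (a : R^c) x, N x -> N (a *: x))].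

Definition nonzero_sub (N : M -> Prop) : Prop := exists x, N x /\ x <> 0.

Definition fully_invariant (N : M -> Prop) : Prop :=
  submodule N /\ forall f, endo f -> forall x, N x -> N (f x).

Definition lS (N : M -> Prop) : (M -> M) -> Prop :=
  fun f => endo f /\ forall x, N x -> f x = 0.

Definition central_in_S (z : M -> M) : Prop :=
  endo z /\ forall f, endo f -> forall x, f (z x) = z (f x).

Definition ideal_S (I : (M -> M) -> Prop) : Prop :=
  (forall f g, I f -> (forall x, f x = g x) -> I g) /\
  [/\ (forall f, I f -> endo f),
      I (fun _ => 0),
      (forall f g, I f -> I g -> I (fun x => f x + g x)),
      (forall f g, I f -> endo g -> I (fun x => g (f x)))
    & (forall f g, I f -> endo g -> I (fun x => f (g x)))].

(* Ideals are sets of functions; two functions that agree pointwise are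
   the same element of S, so membership is taken up to pointwise equality. *)
Definition centrally_s_unital (I : (M -> M) -> Prop) : Prop :=
  ideal_S I /\
  forall a, I a -> exists z, [/\ I z, central_in_S z & forall x, a (z x) = a x].

Definition centrally_endo_AIP : Prop :=
  forall N, fully_invariant N -> centrally_s_unital (lS N).

Definition TM (T : (M -> M) -> Prop) : M -> Prop :=
  fun m => forall N, submodule N -> (forall t x, T t -> N (t x)) -> N m.

Definition cyclic_right_ideal (phi : M -> M) : (M -> M) -> Prop :=
  fun f => exists s, endo s /\ forall x, f x = phi (s x).

Definition HomM (N : M -> Prop) : (M -> M) -> Prop :=
  fun f => endo f /\ forall x, N (f x).

Definition semi_projective : Prop :=
  forall phi, endo phi ->
    forall f, endo f ->
      (cyclic_right_ideal phi f <-> HomM (TM (cyclic_right_ideal phi)) f).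

Definition retractable : Prop :=
  forall N, submodule N -> nonzero_sub N ->
    exists f, HomM N f /\ exists x, f x <> 0.

Definition essential (E : M -> Prop) : Prop :=
  submodule E /\
  forall N, submodule N -> nonzero_sub N -> exists x, [/\ N x, E x & x <> 0].

Definition uniform (U : M -> Prop) : Prop :=
  [/\ submodule U, nonzero_sub U &
    forall N1 N2, submodule N1 -> submodule N2 ->
      (forall x, N1 x -> U x) -> (forall x, N2 x -> U x) ->
      nonzero_sub N1 -> nonzero_sub N2 -> exists x, [/\ N1 x, N2 x & x <> 0]].

Definition direct_sum_of (n : nat) (U : 'I_n -> M -> Prop) (E : M -> Prop) :=
  (forall x, E x <-> exists xs : 'I_n -> M,
        (forall i, U i (xs i)) /\ x = \sum_(i < n) xs i) /\
  (forall xs : 'I_n -> M, (forall i, U i (xs i)) ->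
        \sum_(i < n) xs i = 0 -> forall i, xs i = 0).

Definition finite_uniform_dimension : Prop :=
  exists E, essential E /\
    exists (n : nat) (U : 'I_n -> M -> Prop),
      (forall i, uniform (U i)) /\ direct_sum_of U E.

End ModuleDefs.

Definition quasi_Baer_End (R : pzRingType) (M : lmodType R^c) : Prop :=
  forall I : (M -> M) -> Prop, ideal_S I ->
    exists e, [/\ endo e, (forall x, e (e x) = e x) &
      forall g, endo g ->
        ((forall f, I f -> forall x, f (g x) = 0) <->
         cyclic_right_ideal e g)].

From mathcomp Require Import all_boot all_order all_algebra.
From Stdlib Require Import Classical IndefiniteDescription.
From mathcomp Require Import zify.
Set Implicit Arguments. Unset Strict Implicit. Unset Printing Implicit Defensive.
Import GRing.Theory.
Local Open Scope ring_scope.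

(* Let I be an ideal of S and N := r_M(I), a fully invariant submodule.  If
   l_S(N) contains a central element c acting as the identity on l_S(N), then
   e := 1 - c is an idempotent with r_S(I) = eS.  Such a c exists by finite
   uniform dimension: otherwise the local central units of l_S(N) can be
   enlarged forever, giving commuting endomorphisms z_0, z_1, ... with
   z_k z_(k+1) = z_k, each z_(k+1) killing less than z_k.  The layers
   ker z_(2l) /\ Fix z_(2l+2) then form an infinite independent family of
   nonzero submodules, whereas by an exchange argument an independent family
   of nonzero submodules of a direct sum of r uniform modules has at most r
   members. *)

Section Endomorphisms.
Variables (R : pzRingType) (M : lmodType R^c).
Implicit Types (f g : M -> M) (N : M -> Prop).

Lemma endoD f : endo f -> {morph f : x y / x + y}.
Proof. by move=> hf x y; rewrite -[x in LHS]scale1r hf scale1r. Qed.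

Lemma endo0 f : endo f -> f 0 = 0.
Proof. by move=> hf; apply: (addrI (f 0)); rewrite -endoD // !addr0. Qed.

Lemma endoB f : endo f -> {morph f : x y / x - y}.
Proof. by move=> hf x y; apply: (addIr (f y)); rewrite -endoD // !subrK. Qed.

Lemma endoZ f : endo f -> forall (a : R^c) x, f (a *: x) = a *: f x.
Proof. by move=> hf a x; rewrite -[a *: x]addr0 hf endo0 // addr0. Qed.

Lemma endo_sum f : endo f -> forall (I : Type) (r : seq I) (F : I -> M),
  f (\sum_(i <- r) F i) = \sum_(i <- r) f (F i).
Proof. by move=> hf I r F; rewrite (big_morph f (endoD hf) (endo0 hf)). Qed.

Lemma endo_id : endo (@id M).
Proof. by []. Qed.

Lemma endo_comp f g : endo f -> endo g -> endo (fun x => f (g x)).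
Proof. by move=> hf hg a x y; rewrite hg hf. Qed.

Lemma endo_add f g : endo f -> endo g -> endo (fun x => f x + g x).
Proof. by move=> hf hg a x y; rewrite hf hg scalerDr addrACA. Qed.

Lemma endo_sub f g : endo f -> endo g -> endo (fun x => f x - g x).
Proof. by move=> hf hg a x y; rewrite hf hg scalerBr opprD addrACA. Qed.

Lemma submodule0 N : submodule N -> N 0.
Proof. by case. Qed.

Lemma submoduleD N : submodule N -> forall x y, N x -> N y -> N (x + y).
Proof. by case. Qed.

Lemma submoduleZ N : submodule N -> forall (a : R^c) x, N x -> N (a *: x).
Proof. by case. Qed.

Lemma submoduleN N : submodule N -> forall x, N x -> N (- x).
Proof. by move=> hN x Nx; rewrite -scaleN1r; apply: submoduleZ. Qed.

Lemma submoduleB N : submodule N -> forall x y, N x -> N y -> N (x - y).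
Proof. by move=> hN x y Nx Ny; apply: submoduleD => //; apply: submoduleN. Qed.

Lemma submodule_sum N (I : eqType) (r : seq I) (F : I -> M) :
  submodule N -> (forall i, i \in r -> N (F i)) -> N (\sum_(i <- r) F i).
Proof.
move=> hN NF; rewrite big_seq; apply: (big_ind N) => //; first exact: submodule0.
exact: submoduleD.
Qed.

Lemma submoduleI N1 N2 :
  submodule N1 -> submodule N2 -> submodule (fun x => N1 x /\ N2 x).
Proof.
move=> [a0 aD aZ] [b0 bD bZ]; split=> // [x y [? ?] [? ?]|a x [? ?]].
  by split; [apply: aD | apply: bD].
by split; [apply: aZ | apply: bZ].
Qed.

Lemma submodule_all (I : Type) (P : I -> Prop) (N : I -> M -> Prop) :
  (forall i, submodule (N i)) -> submodule (fun x => forall i, P i -> N i x).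
Proof.
move=> subN; split=> [i _|x y Nx Ny i Pi|a x Nx i Pi]; first exact: submodule0.
  by apply: submoduleD; [| apply: Nx | apply: Ny].
by apply: submoduleZ; [| apply: Nx].
Qed.

End Endomorphisms.

Section UniformDimension.
Variables (R : pzRingType) (M : lmodType R^c).
Implicit Types (F U V : nat -> M -> Prop) (s r : seq nat) (P : pred nat).

Definition in_sum F s P (x : M) :=
  exists xs : nat -> M, [/\ forall l, l \in s -> F l (xs l),
    forall l, l \in s -> ~~ P l -> xs l = 0 & x = \sum_(l <- s) xs l].

Definition independent F s :=
  forall xs : nat -> M, (forall l, l \in s -> F l (xs l)) ->
    \sum_(l <- s) xs l = 0 -> forall l, l \in s -> xs l = 0.

Lemma sum_rem s j (xs : nat -> M) : uniq s ->
  \sum_(k <- rem j s) xs k = \sum_(k <- s) (if k != j then xs k else 0).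
Proof. by move=> us; rewrite rem_filter // big_filter big_mkcond. Qed.

Lemma sum_pred1_seq s l (xs : nat -> M) : uniq s -> l \in s ->
  \sum_(k <- s) (if k == l then xs k else 0) = xs l.
Proof.
by move=> us ls; rewrite (bigD1_seq l) //= eqxx big1 ?addr0 // => k /negbTE ->.
Qed.

Section Family.
Variable F : nat -> M -> Prop.
Hypothesis subF : forall l, submodule (F l).

Lemma in_sum_submodule s P : submodule (in_sum F s P).
Proof.
split.
- exists (fun=> 0); split=> //; last by rewrite big1.
  by move=> l _; apply: submodule0.
- move=> _ _ [xs [Fx Px ->]] [ys [Fy Py ->]]; exists (fun l => xs l + ys l).
  split; last by rewrite big_split.
    by move=> l ls; apply: submoduleD; [| apply: Fx | apply: Fy].
  by move=> l ls nPl; rewrite Px ?Py ?addr0.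
- move=> a _ [xs [Fx Px ->]]; exists (fun l => a *: xs l).
  split; last by rewrite scaler_sumr.
    by move=> l ls; apply: submoduleZ; [| apply: Fx].
  by move=> l ls nPl; rewrite Px ?scaler0.
Qed.

Lemma in_sumT s P x : in_sum F s P x -> in_sum F s predT x.
Proof. by case=> xs [Fx _ ->]; exists xs. Qed.

Lemma in_sum_single s l x : uniq s -> l \in s -> F l x -> in_sum F s (pred1 l) x.
Proof.
move=> us ls Fx; exists (fun k => if k == l then x else 0); split.
- by move=> k _; case: eqP => [->|_] //; apply: submodule0.
- by move=> k _ /= /negbTE ->.
- by rewrite (sum_pred1_seq (fun=> x)).
Qed.

Lemma in_sum_rem s j x : uniq s ->
  in_sum F (rem j s) predT x -> in_sum F s (predC1 j) x.
Proof.
move=> us [xs [Fx _ ->]]; exists (fun k => if k != j then xs k else 0); split.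
- move=> k ks; case: ifP => kj; last exact: submodule0.
  by apply: Fx; rewrite mem_rem_uniq // inE kj.
- by move=> k _ /= /negbTE ->.
- by rewrite sum_rem.
Qed.

Lemma independent_eq s xs ys : independent F s ->
  (forall l, l \in s -> F l (xs l)) -> (forall l, l \in s -> F l (ys l)) ->
  \sum_(l <- s) xs l = \sum_(l <- s) ys l -> forall l, l \in s -> xs l = ys l.
Proof.
move=> indF Fx Fy exy l ls; apply/eqP; rewrite -subr_eq0; apply/eqP.
apply: (indF (fun k => xs k - ys k)) => //; last by rewrite sumrB exy subrr.
by move=> k ks; apply: submoduleB; [| apply: Fx | apply: Fy].
Qed.

Lemma in_sum_eq0 s x : independent F s -> in_sum F s predT x ->
  (forall l, l \in s -> exists P, in_sum F s P x /\ ~~ P l) -> x = 0.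
Proof.
move=> indF [xs [Fx _ ex]] avoid; rewrite ex big1_seq // => l /andP[_ ls].
have [P [[ys [Fy Py ey]] nPl]] := avoid l ls.
by rewrite (independent_eq indF Fx Fy) ?Py // -ex -ey.
Qed.

Lemma independent_rem s j : uniq s -> independent F s -> independent F (rem j s).
Proof.
move=> us indF xs Fx sum0 l; rewrite mem_rem_uniq // inE => /andP[lj ls].
suff: (if l != j then xs l else 0) = 0 by rewrite lj.
apply: (indF (fun k => if k != j then xs k else 0)) => //; last by rewrite -sum_rem.
move=> k ks; case: ifP => kj; last exact: submodule0.
by apply: Fx; rewrite mem_rem_uniq // inE kj.
Qed.

Lemma in_sum_cons a r x : in_sum F (a :: r) predT x ->
  exists u c, [/\ F a u, in_sum F r predT c & x = c + u].
Proof.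
move=> [xs [Fx _ ->]]; exists (xs a), (\sum_(k <- r) xs k); split.
- exact/Fx/mem_head.
- by exists xs; split=> // k kr; apply: Fx; rewrite inE kr orbT.
- by rewrite big_cons addrC.
Qed.

Lemma independent_cons_meet a r c : uniq (a :: r) -> independent F (a :: r) ->
  in_sum F r predT c -> F a c -> c = 0.
Proof.
move=> ur indF Sc Fc; have Sc' := in_sum_single ur (mem_head a r) Fc.
apply: (in_sum_eq0 indF (in_sumT Sc')) => l _.
have [->|la] := eqVneq l a; last by exists (pred1 a); rewrite /= la.
exists (predC1 a); rewrite /= eqxx; split=> //.
by apply: in_sum_rem => //; rewrite /= eqxx.
Qed.

End Family.

Lemma uniform_meet (U : M -> Prop) (N : nat -> M -> Prop) (t : seq nat) :
  uniform U -> (forall j, submodule (N j)) -> t != [::] ->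
  (forall j, j \in t -> exists x, [/\ U x, N j x & x <> 0]) ->
  exists x, [/\ U x, forall j, j \in t -> N j x & x <> 0].
Proof.
move=> [subU _ Umeet] subN; elim: t => [//|j t IH] _ meets.
have [x [Ux Nx nx]] := meets j (mem_head j t).
have [/eqP t0|tn] := boolP (t == [::]).
  by exists x; split=> // i; rewrite t0 inE => /eqP ->.
have [y [Uy Ny ny]] := IH tn (fun i it => meets i (mem_behead (s := j :: t) it)).
have [w [[Uw Nw] [_ Nw'] nw]] := Umeet _ _ (submoduleI subU (subN j))
  (submoduleI subU (submodule_all (fun i => i \in t) subN))
  (fun _ => @proj1 _ _) (fun _ => @proj1 _ _) (ex_intro _ x (conj (conj Ux Nx) nx))
  (ex_intro _ y (conj (conj Uy Ny) ny)).
by exists w; split=> // i; rewrite inE => /orP[/eqP ->|]; [| apply: Nw'].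
Qed.

Lemma uniform_meet_rem_nil (U : M -> Prop) V s : uniform U -> uniq s ->
  (forall l, submodule (V l)) -> independent V s ->
  (forall j, j \in s -> exists x, [/\ U x, in_sum V (rem j s) predT x & x <> 0]) ->
  s = [::].
Proof.
move=> unifU us subV indV meets; have [//|sn] := eqVneq s [::].
have [x [_ Sx nx]] := uniform_meet (N := fun j => in_sum V s (predC1 j)) unifU
  (fun j => in_sum_submodule subV s (predC1 j)) sn
  (fun j js => let: ex_intro x (And3 Ux Sx nx) := meets j js in
     ex_intro _ x (And3 Ux (in_sum_rem subV us Sx) nx)).
have [j0 j0s] : exists j0, j0 \in s by case: (s) sn => // j0 s' _; exists j0; rewrite mem_head.
case: nx; apply: (in_sum_eq0 subV indV (in_sumT (Sx j0 j0s))) => l ls.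
by exists (predC1 l); split; [apply: Sx | rewrite /= eqxx].
Qed.

Definition proj_along (A C N : M -> Prop) : M -> Prop :=
  fun c => C c /\ exists2 u, A u & N (c + u).

Section Projection.
Variables A C : M -> Prop.
Hypotheses (subA : submodule A) (subC : submodule C).
Hypothesis AC0 : forall c, C c -> A c -> c = 0.

Lemma proj_along_submodule N : submodule N -> submodule (proj_along A C N).
Proof.
move=> subN; split.
- by split; [exact: submodule0 | exists 0; rewrite ?addr0; exact: submodule0].
- move=> x y [Cx [u Au Nxu]] [Cy [v Av Nyv]]; split; first exact: submoduleD.
  by exists (u + v); [exact: submoduleD | rewrite addrACA; exact: submoduleD].
- move=> a x [Cx [u Au Nxu]]; split; first exact: submoduleZ.
  by exists (a *: u); [exact: submoduleZ | rewrite -scalerDr; exact: submoduleZ].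
Qed.

Lemma proj_along_nonzero N :
  (forall x, N x -> exists u c, [/\ A u, C c & x = c + u]) ->
  (forall x, N x -> A x -> x = 0) -> nonzero_sub N -> nonzero_sub (proj_along A C N).
Proof.
move=> decN NA0 [v [Nv nv]]; have [u [c [Au Cc ev]]] := decN v Nv.
exists c; split; first by split=> //; exists u; rewrite -?ev.
by move=> c0; apply: nv; apply: NA0 => //; rewrite ev c0 add0r.
Qed.

Lemma proj_along_independent V s : (forall l, submodule (V l)) -> independent V s ->
  (forall x, in_sum V s predT x -> A x -> x = 0) ->
  independent (fun l => proj_along A C (V l)) s.
Proof.
move=> subV indV VA0 ys Pys sum0 l ls.
have /functional_choice[us Aus] :
    forall k, exists u, k \in s -> A u /\ V k (ys k + u).
  move=> k; have [ks|_] := boolP (k \in s); last by exists 0.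
  by have [_ [u Au Vu]] := Pys k ks; exists u.
have sum_us0 : \sum_(k <- s) (ys k + us k) = 0.
  apply: VA0; first by exists (fun k => ys k + us k); split=> // k /Aus[].
  rewrite big_split /= sum0 add0r; by apply: submodule_sum => // k /Aus[].
have /eqP := indV _ (fun k ks => (Aus k ks).2) sum_us0 l ls.
rewrite addr_eq0 => /eqP ysl; apply: AC0; first by have [] := Pys l ls.
by rewrite ysl; apply: submoduleN => //; have [] := Aus l ls.
Qed.

End Projection.

Lemma independent_size_le U r : uniq r -> (forall k, submodule (U k)) ->
  (forall k, k \in r -> uniform (U k)) -> independent U r ->
  forall V s, uniq s -> (forall l, submodule (V l)) ->
  (forall l, l \in s -> nonzero_sub (V l)) -> independent V s ->
  (forall l x, l \in s -> V l x -> in_sum U r predT x) -> (size s <= size r)%N.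
Proof.
elim: r => [|a r IH] ur subU unifU indU V s us subV nzV indV inU.
  case: s us nzV inU {indV} => [//|l s] _ nzV inU.
  have [x [Vx nx]] := nzV l (mem_head l s).
  by have [xs [_ _ ex]] := inU l x (mem_head l s) Vx; rewrite big_nil in ex.
pose C := in_sum U r predT.
have indUr : independent U r.
  by have := independent_rem subU (j := a) ur indU; rewrite /= eqxx.
have CA0 c : C c -> U a c -> c = 0 := independent_cons_meet subU ur indU.
have decV l x : l \in s -> V l x -> exists u c, [/\ U a u, C c & x = c + u].
  by move=> ls /(inU l x ls)/in_sum_cons; apply.
have [[j [js Aj]]|noj] := classic (exists j, j \in s /\
    forall x, in_sum V (rem j s) predT x -> U a x -> x = 0); last first.
  suff -> : s = [::] by [].
  apply: (uniform_meet_rem_nil (unifU a (mem_head a r)) us subV indV) => j js.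
  apply: NNPP => nmeet; apply: noj; exists j; split=> // x Sx Ux.
  by apply: NNPP => nx; apply: nmeet; exists x.
have s_gt0 : (0 < size s)%N by rewrite -has_predT; apply/hasP; exists j.
rewrite -(prednK s_gt0) -(size_rem js) /= ltnS.
have subC : submodule C := in_sum_submodule subU r predT.
have subUa : submodule (U a) := subU a.
apply: (IH _ subU _ indUr (fun l => proj_along (U a) C (V l))) => //.
- by case/andP: ur.
- by move=> k kr; apply: unifU; rewrite inE kr orbT.
- exact: rem_uniq.
- by move=> l; apply: proj_along_submodule.
- move=> l; rewrite mem_rem_uniq // inE => /andP[lj ls].
  apply: proj_along_nonzero (nzV l ls) => [x Vx|x Vx Ux]; first exact: decV Vx.
  apply: Aj Ux; apply: in_sumT (in_sum_single subV (rem_uniq j us) _ Vx).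
  by rewrite mem_rem_uniq // inE lj.
- exact: proj_along_independent (independent_rem subV (j := j) us indV) Aj.
- by move=> l x _ [].
Qed.

Lemma sum_ord_iota n (G : nat -> M) : \sum_(i < n) G i = \sum_(l <- iota 0 n) G l.
Proof. by rewrite -(big_mkord xpredT) /index_iota subn0. Qed.

Definition nat_family n (U : 'I_n -> M -> Prop) (k : nat) : M -> Prop :=
  if insub k is Some i then U i else (fun x => x = 0).

Lemma nat_familyE n (U : 'I_n -> M -> Prop) (i : 'I_n) : nat_family U i = U i.
Proof. by rewrite /nat_family valK. Qed.

Lemma nat_family_submodule n (U : 'I_n -> M -> Prop) :
  (forall i, submodule (U i)) -> forall k, submodule (nat_family U k).
Proof.
move=> subU k; rewrite /nat_family; case: insub => [i|]; first exact: subU.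
by split=> [|x y -> ->|a x ->]; rewrite ?addr0 ?scaler0.
Qed.

Lemma direct_sum_of_in_sum n (U : 'I_n -> M -> Prop) E : direct_sum_of U E ->
  independent (nat_family U) (iota 0 n) /\
  forall x, E x -> in_sum (nat_family U) (iota 0 n) predT x.
Proof.
move=> [spanE indE]; split.
  move=> xs Uxs sum0 l; rewrite mem_iota => /andP[_ ln].
  apply: (indE (fun i => xs i) _ _ (Ordinal ln)); last by rewrite sum_ord_iota.
  by move=> i; rewrite -nat_familyE; apply: Uxs; rewrite mem_iota /=.
move=> x /spanE[xs [Uxs ->]].
exists (fun k => if insub k is Some i then xs i else 0); split=> //.
  by move=> k _; rewrite /nat_family; case: insub.
by rewrite -sum_ord_iota; apply: eq_bigr => i _; rewrite valK.
Qed.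

Lemma finite_uniform_dimension_bound : finite_uniform_dimension M ->
  exists n, forall V, (forall l, submodule (V l)) -> (forall l, nonzero_sub (V l)) ->
    ~ independent V (iota 0 n.+1).
Proof.
move=> [E [[subE essE] [n [U [unifU dsE]]]]]; exists n => V subV nzV indV.
have [indU inU] := direct_sum_of_in_sum dsE.
have subU := nat_family_submodule (fun i => let: And3 subUi _ _ := unifU i in subUi).
suff : (size (iota 0 n.+1) <= size (iota 0 n))%N by rewrite !size_iota ltnn.
apply: (independent_size_le (iota_uniq 0 n) subU _ indU
          (V := fun l x => V l x /\ E x)) => //.
- move=> k; rewrite mem_iota => /andP[_ kn].
  by rewrite -[k]/(nat_of_ord (Ordinal kn)) nat_familyE.
- exact: iota_uniq.
- by move=> l; apply: submoduleI.
- by move=> l _; have [x [Vx Ex nx]] := essE _ (subV l) (nzV l); exists x.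
- by move=> xs VEx; apply: indV => l /VEx[].
- by move=> l x _ [_ /inU].
Qed.

End UniformDimension.

Section CommutingChain.
Variables (R : pzRingType) (M : lmodType R^c) (z : nat -> M -> M).
Hypothesis z_endo : forall k, endo (z k).
Hypothesis z_comm : forall j k x, z j (z k x) = z k (z j x).
Hypothesis z_step : forall k x, z k (z k.+1 x) = z k x.
Hypothesis z_strict : forall k, exists x, z k x = 0 /\ z k.+1 x <> 0.

Lemma chain_absorb j k x : (j < k)%N -> z j (z k x) = z j x.
Proof.
elim: k x => // k IH x; rewrite ltnS leq_eqVlt => /orP[/eqP ->|jk].
  exact: z_step.
by rewrite -(IH (z k.+1 x)) // z_step IH.
Qed.

Lemma chain_fixed_up j k w : z j w = w -> (j <= k)%N -> z k w = w.
Proof.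
move=> zw; rewrite leq_eqVlt => /orP[/eqP <- //|jk].
by rewrite -zw z_comm chain_absorb.
Qed.

Lemma chain_kernel_down j k w : z k w = 0 -> (j <= k)%N -> z j w = 0.
Proof.
move=> zw; rewrite leq_eqVlt => /orP[/eqP -> //|jk].
by rewrite -(chain_absorb w jk) zw endo0.
Qed.

(* Layers are taken two steps apart: [z k.+1] need not fix the vectors it
   adds to the image of [z k], but [z k.+2] does. *)
Definition layer l (w : M) := z l.*2 w = 0 /\ z l.*2.+2 w = w.

Lemma layer_submodule l : submodule (layer l).
Proof.
have [e0 e2] := (z_endo l.*2, z_endo l.*2.+2); split.
- by split; apply: endo0.
- by move=> x y [x0 x2] [y0 y2]; rewrite /layer !endoD // x0 y0 x2 y2 addr0.
- by move=> a x [x0 x2]; rewrite /layer !endoZ // x0 x2 scaler0.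
Qed.

Lemma layer_nonzero l : nonzero_sub (layer l).
Proof.
have [x [x0 nx]] := z_strict l.*2; exists (z l.*2.+1 x); split=> //.
by split; rewrite ?z_step // z_comm z_step.
Qed.

Lemma layer_proj l l' w : layer l' w ->
  z l.*2.+2 w - z l.*2 w = if l' == l then w else 0.
Proof.
move=> [w0 w2]; have [<-|] := eqVneq l' l; first by rewrite w2 w0 subr0.
rewrite neq_ltn => /orP[lt|gt].
  by rewrite !(chain_fixed_up w2) ?subrr //; lia.
by rewrite !(chain_kernel_down w0) ?subrr //; lia.
Qed.

Lemma layer_independent s : uniq s -> independent layer s.
Proof.
move=> us ws Lws sum0 l ls.
have := congr1 (fun x => z l.*2.+2 x - z l.*2 x) sum0.
rewrite /= !(endo_sum (z_endo _)) !(endo0 (z_endo _)) subr0 -sumrB => <-.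
rewrite -(sum_pred1_seq ws us ls); apply: eq_big_seq => k ks.
by rewrite (layer_proj l (Lws k ks)); case: eqP => [->|].
Qed.

Lemma no_commuting_chain : ~ finite_uniform_dimension M.
Proof.
move=> /finite_uniform_dimension_bound[n bound].
exact: bound layer_submodule layer_nonzero (layer_independent (iota_uniq 0 n.+1)).
Qed.

End CommutingChain.

Section CentralIdentity.
Variables (R : pzRingType) (M : lmodType R^c).

Definition central_identity (N : M -> Prop) (c : M -> M) :=
  [/\ lS N c, central_in_S c & forall a, lS N a -> forall x, a (c x) = a x].

Variable N : M -> Prop.
Hypothesis unitalN : centrally_s_unital (lS N).

(* As for idempotents, [z1 + z2 - z1 z2] is a unit wherever [z1] or [z2] is. *)
Lemma lS_common_unit z a : lS N z -> lS N a -> exists w, [/\ lS N w, central_in_S w,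
  forall x, z (w x) = z x & forall x, a (w x) = a x].
Proof.
move=> [ez Nz] [ea Na]; have [_ unit] := unitalN.
have [z1 [[e1 N1] [_ c1] u1]] := unit z (conj ez Nz).
have [z2 [[e2 N2] [_ c2] u2]] := unit a (conj ea Na).
have ew := endo_sub (endo_add e1 e2) (endo_comp e1 e2).
exists (fun x => z1 x + z2 x - z1 (z2 x)); split=> //.
- by split=> // x Nx; rewrite N1 // N2 // (endo0 e1) subr0 addr0.
- by split=> // f ef x; rewrite (endoB ef) (endoD ef) !(c1 f ef) !(c2 f ef).
- by move=> x; rewrite (endoB ez) (endoD ez) !u1 addrK.
- by move=> x; rewrite (endoB ea) (endoD ea) u2 -c1 // u2 addrAC subrr add0r.
Qed.

Lemma lS_unit_step z : ~ (exists c, central_identity N c) ->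
  lS N z -> central_in_S z -> exists z', [/\ lS N z', central_in_S z',
    forall x, z (z' x) = z x & exists x, z x = 0 /\ z' x <> 0].
Proof.
move=> noI Lz cz; have [z1 [Lz1 cz1 u1]] := unitalN.2 z Lz.
have [a [x0 [La ax0]]] : exists a x0, lS N a /\ a (z1 x0) <> a x0.
  apply: NNPP => all_fixed; apply: noI; exists z1; split=> // a La x.
  by apply: NNPP => ne; apply: all_fixed; exists a, x.
have [w [Lw cw uz ua]] := lS_common_unit Lz La.
exists w; split=> //; exists (x0 - z1 x0); split.
  by rewrite (endoB Lz.1) u1 subrr.
move=> w0; apply: ax0; apply/eqP; rewrite eq_sym -subr_eq0 -(endoB La.1) -ua w0.
by rewrite (endo0 La.1).
Qed.

Lemma central_identity_exists : finite_uniform_dimension M ->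
  exists c, central_identity N c.
Proof.
move=> fud; apply: NNPP => noI.
have /functional_choice[next hnext] : forall z, exists z',
    lS N z /\ central_in_S z -> [/\ lS N z', central_in_S z',
      forall x, z (z' x) = z x & exists x, z x = 0 /\ z' x <> 0].
  move=> z; have [[Lz cz]|nz] := classic (lS N z /\ central_in_S z); last first.
    by exists z => /nz.
  by have [z' ?] := lS_unit_step noI Lz cz; exists z'.
have [_ [_ L0 _ _ _]] := unitalN.1.
have [z0 [Lz0 cz0 _]] := unitalN.2 _ L0.
pose zs k := iter k next z0.
have Lzs k : lS N (zs k) /\ central_in_S (zs k).
  by elim: k => [|k [Lk ck]] //=; have [] := hnext _ (conj Lk ck).
apply: (@no_commuting_chain _ _ zs) fud => [k|j k x|k x|k].
- by have [[]] := Lzs k.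
- by have [[ej _] _] := Lzs j; have [_ [_ ck]] := Lzs k; apply: ck.
- by have [_ _ ->] := hnext _ (Lzs k).
- by have [_ _ _] := hnext _ (Lzs k).
Qed.

End CentralIdentity.

Section QuasiBaer.
Variables (R : pzRingType) (M : lmodType R^c) (I : (M -> M) -> Prop).
Hypothesis idealI : ideal_S I.

Definition r_annM (x : M) := forall f, I f -> f x = 0.

Lemma r_annM_fully_invariant : fully_invariant r_annM.
Proof.
have [_ [Iendo _ _ _ Ir]] := idealI; split; last first.
  by move=> g eg x Nx f If; apply: Nx (Ir f g If eg).
split=> [f If|x y Nx Ny f If|a x Nx f If]; first exact: endo0 (Iendo f If).
  by rewrite (endoD (Iendo f If)) Nx ?Ny ?addr0.
by rewrite (endoZ (Iendo f If)) Nx ?scaler0.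
Qed.

Lemma right_annihilator_idempotent c : central_identity r_annM c ->
  let e x := x - c x in
  [/\ endo e, (forall x, e (e x) = e x) & forall g, endo g ->
    ((forall f, I f -> forall x, f (g x) = 0) <-> cyclic_right_ideal e g)].
Proof.
move=> [[ec Nc] _ unit_c] e; have [_ [Iendo _ _ _ _]] := idealI.
have Ic f : I f -> forall x, f (c x) = f x.
  by move=> If; apply: unit_c; split=> [|x Nx]; [apply: Iendo | apply: Nx].
split=> [||g endo_g]; first exact: (endo_sub (@endo_id _ M) ec).
  by move=> x; rewrite /e (endoB ec) (unit_c c) ?subrr ?subr0.
split=> [Ig|[s [es eg]] f If x].
  by exists g; split=> // x; rewrite /e Nc ?subr0 // => f If; apply: Ig.
by rewrite eg /e (endoB (Iendo f If)) Ic ?subrr.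
Qed.

End QuasiBaer.

Theorem corollary3p7 (R : pzRingType) (M : lmodType R^c) :
  centrally_endo_AIP M -> semi_projective M -> retractable M ->
  finite_uniform_dimension M -> quasi_Baer_End M.
Proof.
move=> AIP _ _ fud I idealI.
have unital := AIP _ (r_annM_fully_invariant idealI).
have [c cI] := central_identity_exists unital fud.
by exists (fun x => x - c x); apply: right_annihilator_idempotent.
Qed.
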